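(* Let $n\ge 4$ and let $P_n$ be the path on $n$ vertices with end vertices $u$ and $v$. Then there exists a permutation $\sigma$ of $V(P_n)$ such that: (1) $\sigma$ is a 2-placement of $P_n$; (2) $\sigma(P_n)\subseteq P_n^4$; (3) $dist(u,\sigma(u))=1$ and $dist(v,\sigma(v))\le 1$; (4) every cycle of $\sigma$ has length at most $4$.
   Context: All graphs are finite, simple and undirected; $dist$ denotes the distance in $P_n$. For a graph $G$, a permutation $\sigma$ of $V(G)$ is a 2-placement of $G$ if for every edge $ab\in E(G)$, $\sigma(a)\sigma(b)\notin E(G)$. $G^k$ denotes the $k$-th power of $G$ (same vertex set, distinct vertices adjacent iff their distance in $G$ is at most $k$); $\sigma(G)\subseteq G^k$ means that for every edge $ab$ of $G$, $dist_G(\sigma(a),\sigma(b))\le k$. The cycles of $\sigma$ are those of its disjoint cycle decomposition, fixed points counting as cycles of length $1$. *)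

From mathcomp Require Import all_boot all_fingroup.
Set Implicit Arguments. Unset Strict Implicit. Unset Printing Implicit Defensive.

Definition pdist (n : nat) (i j : 'I_n) : nat := maxn i j - minn i j.
Definition path_edge (n : nat) (i j : 'I_n) : bool := pdist i j == 1.

Definition two_placement (n : nat) (s : {perm 'I_n}) : Prop :=
  forall a b : 'I_n, path_edge a b -> ~~ path_edge (s a) (s b).

(* sigma(P_n) is a subgraph of P_n^k. *)
Definition in_power (n k : nat) (s : {perm 'I_n}) : Prop :=
  forall a b : 'I_n, path_edge a b -> pdist (s a) (s b) <= k.

Definition cycles_bounded (n m : nat) (s : {perm 'I_n}) : Prop :=
  forall x : 'I_n, #|porbit s x| <= m.

From mathcomp Require Import all_boot all_fingroup.
From mathcomp Require Import zify.

Set Implicit Arguments.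
Unset Strict Implicit.
Unset Printing Implicit Defensive.

(* The path P_n has vertices 0, ..., n-1.  Cut it into consecutive segments:
   blocks of length 4, followed by one final segment of length 4 + r with
   r = n mod 4 < 4.  On each segment [b, b+k) the permutation acts as
   b + p j for a fixed local pattern p of [0, k):
     p = 1 3 0 2 (blocks, and r = 0),   1 3 0 2 4 (r = 1),
         1 4 2 0 3 5 (r = 2),           1 3 6 4 0 2 5 (r = 3).
   A pattern is "good" when it maps [0, k) into itself, moves consecutive
   points to distance 2..4, has all points on cycles of length <= 4, sends
   0 to 1 and moves k-1 by at most 1; for the four patterns this is a finite
   computation.  Goodness is exactly what makes the glued map work: across a
   boundary b the points b-1, b go to b-2 or b-1 and to b+1.  So the file
   first turns a map on [0, n) whose points are all periodic with period
   <= c into a permutation whose cycles have length <= c, then proves that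
   any concatenation of good patterns yields the required placement, and
   finally exhibits the segmentation described above. *)

Definition ndist (a b : nat) : nat := maxn a b - minn a b.

Lemma ndistC a b : ndist a b = ndist b a.
Proof. by rewrite /ndist maxnC minnC. Qed.

Lemma ndistDl b x y : ndist (b + x) (b + y) = ndist x y.
Proof. by rewrite /ndist; lia. Qed.

Lemma path_edgeP n (a b : 'I_n) :
  path_edge a b -> b = a.+1 :> nat \/ a = b.+1 :> nat.
Proof. by rewrite /path_edge /pdist => /eqP; lia. Qed.

(* A point returning to itself after k > 0 steps lies on a cycle of length
   at most k: the orbit of x lists #|porbit s x| distinct iterates. *)
Lemma card_porbit_le (T : finType) (s : {perm T}) x k :
  0 < k -> iter k s x = x -> #|porbit s x| <= k.
Proof.
move=> k_gt0 sk_x; rewrite leqNgt; apply/negP => lt_k.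
have := nth_uniq x _ _ (uniq_traject_porbit s x).
rewrite size_traject => /(_ 0 k (leq_ltn_trans (leq0n k) lt_k) lt_k).
by rewrite !nth_traject ?(ltn_trans k_gt0 lt_k) //= sk_x eqxx eq_sym eqn0Ngt k_gt0.
Qed.

Lemma perm_of_periodic n c (g : nat -> nat) :
  (forall i, i < n -> g i < n) ->
  (forall i, i < n -> exists2 t, 0 < t <= c & iter t g i = i) ->
  exists s : {perm 'I_n}, (forall i, val (s i) = g i) /\ cycles_bounded c s.
Proof.
move=> g_lt g_per.
have g_fact i : i < n -> iter c`! g i = i.
  move=> lt_in; have [t t_le gt_i] := g_per i lt_in.
  have [q ->] := dvdnP (dvdn_fact t_le).
  by rewrite iterM; apply: iter_fix.
pose f (i : 'I_n) : 'I_n := Ordinal (g_lt i (ltn_ord i)).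
(* g is injective on [0, n), as its c!-th iterate is the identity there. *)
have f_inj : injective f.
  move=> x y /(congr1 val) /= gxy; apply: val_inj.
  by rewrite /= -(g_fact x) ?ltn_ord // -(g_fact y) ?ltn_ord //
    -(prednK (fact_gt0 c)) !iterSr gxy.
pose s := perm f_inj.
have sE i : val (s i) = g i by rewrite permE.
have iter_sE t (i : 'I_n) : iter t s i = iter t g i :> nat.
  by elim: t => //= t IH; rewrite sE IH.
exists s; split=> // x.
have [t /andP[t_gt0 t_le] gt_x] := g_per x (ltn_ord x).
apply: leq_trans t_le; apply: card_porbit_le => //.
by apply: val_inj; rewrite /= iter_sE.
Qed.

(* A local pattern p of a segment of length k, with the properties needed
   to glue segments together (decidable, so checkable by computation). *)
Definition good_pattern (p : nat -> nat) (k : nat) : bool :=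
  (0 < k) && [&& all (fun j => p j < k) (iota 0 k),
      all (fun j => 2 <= ndist (p j) (p j.+1) <= 4) (iota 0 k.-1),
      all (fun j => has (fun t => iter t p j == j) (iota 1 4)) (iota 0 k),
      p 0 == 1
    & ndist (p k.-1) k.-1 <= 1].

Lemma good_patternP p k : good_pattern p k ->
  [/\ forall j, j < k -> p j < k,
      forall j, j.+1 < k -> 2 <= ndist (p j) (p j.+1) <= 4,
      forall j, j < k -> exists2 t, 0 < t <= 4 & iter t p j = j,
      p 0 = 1
    & ndist (p k.-1) k.-1 <= 1].
Proof.
case/andP=> _ /and5P[/allP p_lt /allP p_edge /allP p_per /eqP p0 p_last].
split=> // [j lt_jk | j lt_jk | j lt_jk].
- by apply: p_lt; rewrite mem_iota.
- by apply: p_edge; rewrite mem_iota /=; lia.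
have /hasP[t] : has (fun t => iter t p j == j) (iota 1 4) by apply: p_per; rewrite mem_iota.
by rewrite mem_iota => t_range /eqP; exists t => //; lia.
Qed.

Lemma good_pattern_gt0 p k : good_pattern p k -> 0 < k.
Proof. by case/andP. Qed.

Definition pattern (r : nat) : nat -> nat :=
  nth 0 (match r with
         | 0 => [:: 1; 3; 0; 2]
         | 1 => [:: 1; 3; 0; 2; 4]
         | 2 => [:: 1; 4; 2; 0; 3; 5]
         | _ => [:: 1; 3; 6; 4; 0; 2; 5]
         end).

Lemma pattern_good r : r < 4 -> good_pattern (pattern r) (4 + r).
Proof. by case: r => [|[|[|[|r]]]]. Qed.

(* A map g on [0, n) glued from good patterns: seg b k p says that g acts on
   the segment [b, b+k) as b + p, the segments cover [0, n), and each one
   that ends before n is followed by another. *)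
Section GluedPatterns.

Variables (n : nat) (g : nat -> nat) (seg : nat -> nat -> (nat -> nat) -> Prop).

Hypothesis seg_cover :
  forall i, i < n -> exists b k p, [/\ seg b k p, b <= i & i < b + k].
Hypothesis seg_next :
  forall b k p, seg b k p -> b + k < n -> exists k' p', seg (b + k) k' p'.
Hypothesis seg_le : forall b k p, seg b k p -> b + k <= n.
Hypothesis seg_good : forall b k p, seg b k p -> good_pattern p k.
Hypothesis seg_act :
  forall b k p, seg b k p -> forall j, j < k -> g (b + j) = b + p j.

Lemma seg_of i : i < n -> exists b k p j, [/\ seg b k p, j < k & i = b + j].
Proof.
move=> /seg_cover[b [k [p [sbkp le_bi lt_i]]]].
by exists b, k, p, (i - b); split=> //; lia.
Qed.

Lemma glued_lt i : i < n -> g i < n.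
Proof.
case/seg_of=> b [k [p [j [sbkp lt_jk ->]]]].
have [p_lt _ _ _ _] := good_patternP (seg_good sbkp).
by rewrite (seg_act sbkp lt_jk); have := p_lt j lt_jk; have := seg_le sbkp; lia.
Qed.

Lemma iter_glued b k p j t : seg b k p -> j < k ->
  iter t g (b + j) = b + iter t p j /\ iter t p j < k.
Proof.
move=> sbkp lt_jk; have [p_lt _ _ _ _] := good_patternP (seg_good sbkp).
elim: t => [|t [IHg IHp]] //=.
by rewrite IHg (seg_act sbkp IHp) p_lt.
Qed.

Lemma glued_periodic i : i < n -> exists2 t, 0 < t <= 4 & iter t g i = i.
Proof.
case/seg_of=> b [k [p [j [sbkp lt_jk ->]]]].
have [_ _ p_per _ _] := good_patternP (seg_good sbkp).
have [t t_range pt_j] := p_per j lt_jk.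
by exists t => //; have [-> _] := iter_glued t sbkp lt_jk; rewrite pt_j.
Qed.

(* Consecutive points go to distance 2..4: inside a segment by goodness of
   its pattern; across a boundary b' the images are b' - 2 or b' - 1, and
   b' + 1. *)
Lemma glued_edge i : i.+1 < n -> 2 <= ndist (g i) (g i.+1) <= 4.
Proof.
move=> lt_i1n; have [b [k [p [j [sbkp lt_jk Ei]]]]] := seg_of (ltnW lt_i1n).
rewrite {}Ei in lt_i1n *.
have [p_lt p_edge _ _ p_last] := good_patternP (seg_good sbkp).
rewrite -addnS (seg_act sbkp lt_jk).
have [lt_j1k | le_kj1] := ltnP j.+1 k.
  by rewrite (seg_act sbkp lt_j1k) ndistDl p_edge.
have Ej : j = k.-1 by lia.
have lt_bkn : b + k < n by lia.
have [k' [p' sb']] := seg_next sbkp lt_bkn.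
have [_ _ _ p'0 _] := good_patternP (seg_good sb').
have -> : b + j.+1 = b + k + 0 by lia.
rewrite (seg_act sb' (good_pattern_gt0 (seg_good sb'))) p'0.
have := p_lt j lt_jk; move: p_last; rewrite -Ej /ndist; lia.
Qed.

Lemma glued_first : 0 < n -> g 0 = 1.
Proof.
case/seg_of=> b [k [p [j [sbkp lt_jk Eb]]]].
have [_ _ _ p0 _] := good_patternP (seg_good sbkp).
have [b0 j0] : b = 0 /\ j = 0 by lia.
by subst b j; have := seg_act sbkp lt_jk; rewrite p0.
Qed.

Lemma glued_last : 0 < n -> ndist (g n.-1) n.-1 <= 1.
Proof.
rewrite -ltn_predL => /seg_of[b [k [p [j [sbkp lt_jk En]]]]].
have [p_lt _ _ _ p_last] := good_patternP (seg_good sbkp).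
have Ej : j = k.-1 by have := seg_le sbkp; lia.
rewrite En (seg_act sbkp lt_jk); have := p_lt j lt_jk.
move: p_last; rewrite -Ej /ndist; lia.
Qed.

Lemma glued_placement (u v : 'I_n) : val u = 0 -> val v = n.-1 ->
  exists s : {perm 'I_n},
    [/\ two_placement s,
        in_power 4 s,
        pdist u (s u) = 1 /\ pdist v (s v) <= 1
      & cycles_bounded 4 s].
Proof.
move=> u0 vn; have n_gt0 : 0 < n := leq_ltn_trans (leq0n u) (ltn_ord u).
have [s [sE s_cyc]] := perm_of_periodic (@glued_lt) (@glued_periodic).
have s_edge a b : path_edge a b -> 2 <= pdist (s a) (s b) <= 4.
  rewrite /pdist -/(ndist _ _) !sE.
  case/path_edgeP=> [Eb | Ea]; last rewrite ndistC; rewrite ?Eb ?Ea; apply: glued_edge.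
  - by rewrite -Eb.
  - by rewrite -Ea.
exists s; split=> //.
- by move=> a b /s_edge; rewrite /path_edge; case: eqP => // ->.
- by move=> a b /s_edge /andP[].
- split; rewrite /pdist -/(ndist _ _) sE.
  + by rewrite u0 glued_first.
  + by rewrite vn ndistC glued_last.
Qed.

End GluedPatterns.

Section Blocks.

Variables m r : nat.
Hypotheses (m_mod4 : 4 %| m) (r_lt4 : r < 4).

Definition block_map (i : nat) : nat :=
  if i < m then 4 * (i %/ 4) + pattern 0 (i %% 4) else m + pattern r (i - m).

Definition block_seg (b k : nat) (p : nat -> nat) : Prop :=
  [/\ 4 %| b, b + 4 <= m, k = 4 & p = pattern 0] \/
  [/\ b = m, k = 4 + r & p = pattern r].

Lemma block_cover i : i < m + (4 + r) ->
  exists b k p, [/\ block_seg b k p, b <= i & i < b + k].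
Proof.
move=> lt_in; case: (ltnP i m) => [lt_im | le_mi].
  exists (4 * (i %/ 4)), 4, (pattern 0).
  by split; [left; split|..]; rewrite ?dvdn_mulr //; lia.
by exists m, (4 + r), (pattern r); split=> //; right.
Qed.

Lemma block_next b k p : block_seg b k p -> b + k < m + (4 + r) ->
  exists k' p', block_seg (b + k) k' p'.
Proof.
case=> [[b4 le_b4m -> _] _ | [-> -> _]]; last by rewrite ltnn.
have [le_b8m | lt_mb8] := leqP (b + 8) m.
  by exists 4, (pattern 0); left; split=> //; [rewrite dvdn_addr | lia].
by exists (4 + r), (pattern r); right; split=> //; lia.
Qed.

Lemma block_le b k p : block_seg b k p -> b + k <= m + (4 + r).
Proof. by case=> [[_ ? -> _] | [-> -> _]]; lia. Qed.

Lemma block_good b k p : block_seg b k p -> good_pattern p k.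
Proof. by case=> [[_ _ -> ->] | [_ -> ->]]; apply: pattern_good. Qed.

Lemma block_act b k p : block_seg b k p ->
  forall j, j < k -> block_map (b + j) = b + p j.
Proof.
move=> + j; rewrite /block_map.
case=> [[b4 le_b4m -> ->] lt_j4 | [-> -> ->] _]; last by rewrite ltnNge leq_addr addKn.
rewrite ifT; last by lia.
by have [-> ->] : 4 * ((b + j) %/ 4) = b /\ (b + j) %% 4 = j by lia.
Qed.

End Blocks.

Theorem theorem1p6 (n : nat) (hn : 4 <= n) (u v : 'I_n)
    (hu : val u = 0) (hv : val v = n.-1) :
  exists s : {perm 'I_n},
    [/\ two_placement s,
        in_power 4 s,
        pdist u (s u) = 1 /\ pdist v (s v) <= 1
      & cycles_bounded 4 s].
Proof.
pose r := n %% 4; pose m := n - (4 + r).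
have r_lt4 : r < 4 by rewrite ltn_mod.
have m_mod4 : 4 %| m by rewrite /m /r; lia.
have En : n = m + (4 + r) by rewrite /m /r; lia.
apply: (glued_placement (g := block_map m r) (seg := block_seg m r) _ _ _ _ _ hu hv).
- by rewrite En; apply: block_cover.
- by move=> b k p; rewrite En; apply: block_next.
- by move=> b k p; rewrite En; apply: block_le.
- exact: block_good.
- exact: block_act.
Qed.
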